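(* On the $\kappa G^\#$-module $\Lambda_G$: (i) the dot product and the bracket are $\kappa G^\#$-bilinear; the dot product is symmetric and the bracket skew-symmetric; (ii) the bracket satisfies the Jacobi identity $[[\vec x,\vec y],\vec z]+[[\vec y,\vec z],\vec x]+[[\vec z,\vec x],\vec y]=0$; (iii) the map $(\vec x,\vec y,\vec z)\mapsto[\vec x,\vec y]\cdot\vec z$ is an alternating trilinear map; (iv) $[[\vec x,\vec y],\vec z]=(\vec x\cdot\vec z)\vec y-(\vec y\cdot\vec z)\vec x$ for all $\vec x,\vec y,\vec z\in\Lambda_G$.
   Context: Let $\kappa$ be a field of characteristic $0$ and $G$ a group. Let $*:\kappa G\to\kappa G$ be the $\kappa$-linear map with $g^*=g^{-1}$, $(\kappa G)^*$ its fixed points, and $A_G$ the quotient of $\kappa G$ by the two-sided ideal generated by all $ab-ba$, $a\in\kappa G$, $b\in(\kappa G)^*$; $*$ descends to $A_G$. Let $\kappa G^\#=\{x\in A_G:x^*=x\}$ (a commutative subring of the centre of $A_G$) and $\Lambda_G=\{x\in A_G:x^*=-x\}$, a $\kappa G^\#$-module. For $\vec x,\vec y\in\Lambda_G$ define $\vec x\cdot\vec y=-\tfrac12(\vec x\vec y+\vec y\vec x)\in\kappa G^\#$ and $[\vec x,\vec y]=\tfrac12(\vec x\vec y-\vec y\vec x)\in\Lambda_G$. *)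

From HB Require Import structures.
From mathcomp Require Import all_boot all_order all_algebra.
Set Implicit Arguments. Unset Strict Implicit. Unset Printing Implicit Defensive.
Import GRing.Theory.
Local Open Scope ring_scope.

(* The group algebra kappa G of an arbitrary (possibly infinite) group G,
   realised by formal finite sums  sum_i c_i g_i  (lists of pairs),
   two lists being the same element of kappa G iff all their coefficients agree. *)
Section GroupAlgebra.
Variables (K : fieldType) (G : groupType).

Definition KG := seq (K * G).

Definition coef (a : KG) (g : G) : K := \sum_(p <- a | p.2 == g) p.1.

Definition kg_eq (a b : KG) : Prop := forall g, coef a g = coef b g.

Definition kg_add (a b : KG) : KG := a ++ b.
Definition kg_scale (c : K) (a : KG) : KG := [seq (c * p.1, p.2) | p <- a].
Definition kg_opp (a : KG) : KG := kg_scale (-1) a.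
Definition kg_sub (a b : KG) : KG := kg_add a (kg_opp b).
Definition kg_mul (a b : KG) : KG :=
  [seq (p.1 * q.1, monoid.mul p.2 q.2) | p <- a, q <- b].
Definition kg_star (a : KG) : KG := [seq (p.1, monoid.inv p.2) | p <- a].

Definition kg_fixed (b : KG) : Prop := kg_eq (kg_star b) b.

Inductive idealI : KG -> Prop :=
  | idealI_gen a b : kg_fixed b -> idealI (kg_sub (kg_mul a b) (kg_mul b a))
  | idealI_eq a b : kg_eq a b -> idealI a -> idealI b
  | idealI_zero : idealI [::]
  | idealI_add a b : idealI a -> idealI b -> idealI (kg_add a b)
  | idealI_lmul c a : idealI a -> idealI (kg_mul c a)
  | idealI_rmul a c : idealI a -> idealI (kg_mul a c).

(* equality in A_G = kappa G / I (elements of A_G are represented by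
   elements of kappa G) *)
Definition AG_eq (a b : KG) : Prop := idealI (kg_sub a b).

Definition in_sharp (a : KG) : Prop := AG_eq (kg_star a) a.
Definition in_Lambda (x : KG) : Prop := AG_eq (kg_star x) (kg_opp x).

Definition dotG (x y : KG) : KG :=
  kg_scale (- (2%:R)^-1) (kg_add (kg_mul x y) (kg_mul y x)).
Definition brkG (x y : KG) : KG :=
  kg_scale ((2%:R)^-1) (kg_sub (kg_mul x y) (kg_mul y x)).

End GroupAlgebra.

From HB Require Import structures.
From mathcomp Require Import all_boot all_order all_algebra ring.
From mathcomp Require Import boolp.
Set Implicit Arguments. Unset Strict Implicit. Unset Printing Implicit Defensive.
Import GRing.Theory.
Local Open Scope ring_scope.

(* The theorem is reduced to noncommutative ring theory in A_G.
   - Abstract part: in any ring R with a central element h such that 2h = 1,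
     set  x.y = -h(xy + yx)  and  [x,y] = h(xy - yx).  These forms are
     additive in each argument, commute with multiplication by central
     elements, satisfy Jacobi, and, whenever the relevant anticommutators are
     central, [x,y].x = 0 and [[x,y],z] = (x.z)y - (y.z)x.
   - Formal sums: an element of kappa G is determined by its integrals
     int a f = sum_i c_i f(g_i) against all f : G -> K, which turns every
     identity of kappa G into a computation with finite sums.  Equality in
     A_G is shown to be a congruence.
   - Quotient: the classes of this congruence form a ring A_G, and the
     projection pi sends dotG, brkG to the abstract forms with h = pi(1/2).
   - Centrality: an element fixed by star in A_G is central, because its
     symmetrisation lies in (kappa G)^*; hence products xy + yx and xx of
     elements of Lambda_G are central and the abstract results apply. *)

Lemma jacobi_zmod (V : zmodType) (a b c d e f : V) :
  (a - b - (c - d)) + (e - d - (a - f)) + (c - f - (e - b)) = 0.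
Proof.
rewrite !opprB !addrA.
rewrite (ACl ((1*8)*(2*11)*(3*6)*(4*9)*(5*12)*(7*10)))%AC /=.
by rewrite !(subrr, addNr, add0r).
Qed.

Lemma double_zmod (V : zmodType) (u a b : V) : u + a - (- u + b) - (a - b) = u + u.
Proof. by rewrite opprD opprK opprB -addrA [u - b + _]addrA subrK addrCA addrK. Qed.

Definition central (R : pzRingType) (u : R) : Prop := forall v, u * v = v * u.

Section Anticommutator.
Variables (R : pzRingType) (h : R).
Hypotheses (hC : central h) (h2 : h *+ 2 = 1).
Implicit Types a x y z : R.

(* the dot product and the bracket, with h playing the role of 1/2 *)
Definition dot x y : R := - (h * (x * y + y * x)).
Definition brk x y : R := h * (x * y - y * x).

Lemma dotC x y : dot x y = dot y x.
Proof. by rewrite /dot addrC. Qed.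

Lemma brkN x y : brk x y = - brk y x.
Proof. by rewrite /brk -opprB mulrN. Qed.

Lemma brk_self x : brk x x = 0.
Proof. by rewrite /brk subrr mulr0. Qed.

Lemma dot0l y : dot 0 y = 0.
Proof. by rewrite /dot mul0r mulr0 addr0 mulr0 oppr0. Qed.

Lemma dotNl x y : dot (- x) y = - dot x y.
Proof. by rewrite /dot mulNr mulrN -opprD mulrN. Qed.

Lemma dotDl x x' y : dot (x + x') y = dot x y + dot x' y.
Proof. by rewrite /dot mulrDl [y * _]mulrDr addrACA mulrDr opprD. Qed.

Lemma dotDr x y y' : dot x (y + y') = dot x y + dot x y'.
Proof. by rewrite dotC dotDl !(dotC _ x). Qed.

Lemma brkDl x x' y : brk (x + x') y = brk x y + brk x' y.
Proof. by rewrite /brk mulrDl [y * _]mulrDr opprD addrACA mulrDr. Qed.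

Lemma brkDr x y y' : brk x (y + y') = brk x y + brk x y'.
Proof. by rewrite brkN brkDl opprD -!brkN. Qed.

Lemma central_mulCA a x y : central a -> x * (a * y) = a * (x * y).
Proof. by move=> aC; rewrite mulrA -aC mulrA. Qed.

Lemma dotMl a x y : central a -> dot (a * x) y = a * dot x y.
Proof.
move=> aC; rewrite /dot -mulrA (central_mulCA _ _ aC) -mulrDr.
by rewrite (central_mulCA _ _ aC) mulrN.
Qed.

Lemma dotMr a x y : central a -> dot x (a * y) = a * dot x y.
Proof. by move=> aC; rewrite dotC dotMl // dotC. Qed.

Lemma brkMl a x y : central a -> brk (a * x) y = a * brk x y.
Proof.
move=> aC; rewrite /brk -mulrA (central_mulCA _ _ aC) -mulrBr.
by rewrite (central_mulCA _ _ aC).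
Qed.

Lemma brkMr a x y : central a -> brk x (a * y) = a * brk x y.
Proof. by move=> aC; rewrite brkN brkMl // brkN mulrN opprK. Qed.

Lemma brk_brk x y z :
  brk (brk x y) z = h * h * ((x * y - y * x) * z - z * (x * y - y * x)).
Proof.
rewrite /brk; set c := x * y - y * x.
by rewrite -[h * c * z]mulrA (central_mulCA _ _ hC) -mulrBr mulrA.
Qed.

Lemma jacobi x y z : brk (brk x y) z + brk (brk y z) x + brk (brk z x) y = 0.
Proof. by rewrite !brk_brk -!mulrDr !mulrBl !mulrBr !mulrA jacobi_zmod mulr0. Qed.

Lemma dot_brk_self x y : central (x * x) -> dot (brk x y) x = 0.
Proof.
move=> xxC; rewrite /dot /brk; set c := x * y - y * x.
have cx0 : c * x + x * c = 0.
  by rewrite /c mulrBl mulrBr !mulrA addrC addrA subrK xxC mulrA subrr.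
by rewrite -mulrA (central_mulCA _ _ hC) -mulrDr cx0 !mulr0 oppr0.
Qed.

(* (iv): writing xz = c - zx and yz = d - zy with c, d central, the double
   commutator [xy - yx, z] collapses to 2(dx - cy) *)
Lemma brk_brk_dot x y z : central (x * z + z * x) -> central (y * z + z * y) ->
  brk (brk x y) z = dot x z * y - dot y z * x.
Proof.
set c := x * z + z * x; set d := y * z + z * y => cC dC.
have yz : y * z = d - z * y by rewrite /d addrK.
have xz : x * z = c - z * x by rewrite /c addrK.
have xyz : x * y * z = d * x - c * y + z * x * y.
  by rewrite -mulrA yz mulrBr -dC mulrA xz mulrBl opprD opprK addrA.
have yxz : y * x * z = - (d * x - c * y) + z * y * x.
  by rewrite -mulrA xz mulrBr -cC mulrA yz mulrBl opprD opprK addrA opprB.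
rewrite brk_brk [(x * y - y * x) * z]mulrBl [z * (x * y - y * x)]mulrBr.
rewrite !mulrA xyz yxz double_zmod -mulr2n.
rewrite mulrnAr -mulrA -mulrnAl h2 mul1r /dot !mulNr -!mulrA -/c -/d.
by rewrite mulrBr opprK addrC.
Qed.
End Anticommutator.

Section FormalSums.
Variables (K : fieldType) (G : groupType).
Implicit Types (a b c : KG K G) (f : G -> K).

Definition int a f : K := \sum_(p <- a) p.1 * f p.2.

Lemma int_ext a f f' : (forall g, f g = f' g) -> int a f = int a f'.
Proof. by move=> ff'; apply: eq_bigr => p _; rewrite ff'. Qed.

Lemma int_fD a f f' : int a (fun g => f g + f' g) = int a f + int a f'.
Proof. by rewrite /int -big_split; apply: eq_bigr => p _; rewrite mulrDr. Qed.

Lemma int_fZ a k f : int a (fun g => k * f g) = k * int a f.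
Proof. by rewrite /int mulr_sumr; apply: eq_bigr => p _; rewrite mulrCA. Qed.

Lemma int_nil f : int [::] f = 0.
Proof. by rewrite /int big_nil. Qed.

Lemma int_cat a b f : int (kg_add a b) f = int a f + int b f.
Proof. by rewrite /int big_cat. Qed.

Lemma int_scale k a f : int (kg_scale k a) f = k * int a f.
Proof. by rewrite /int big_map mulr_sumr; apply: eq_bigr => p _; rewrite mulrA. Qed.

Lemma int_mul a b f :
  int (kg_mul a b) f = int a (fun g => int b (fun g' => f (monoid.mul g g'))).
Proof.
rewrite /int big_allpairs_dep; apply: eq_bigr => p _.
by rewrite mulr_sumr; apply: eq_bigr => q _ /=; rewrite !mulrA [p.1 * _]mulrC.
Qed.

Lemma int_star a f : int (kg_star a) f = int a (fun g => f (monoid.inv g)).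
Proof. by rewrite /int big_map. Qed.

Lemma int_exch a b (F : G -> G -> K) :
  int a (fun g => int b (F g)) = int b (fun g' => int a (F^~ g')).
Proof.
rewrite /int; under eq_bigr do rewrite mulr_sumr.
rewrite exchange_big; apply: eq_bigr => q _; rewrite mulr_sumr.
by apply: eq_bigr => p _; rewrite !mulrA [q.1 * _]mulrC.
Qed.

Lemma coef_int a g : coef a g = int a (fun g' => (g' == g)%:R).
Proof.
rewrite /coef /int big_mkcond; apply: eq_bigr => p _.
by case: (p.2 == g); rewrite ?mulr1 ?mulr0.
Qed.

Lemma int_coef a f (s : seq G) : uniq s -> (forall p, p \in a -> p.2 \in s) ->
  int a f = \sum_(g <- s) coef a g * f g.
Proof.
move=> s_uniq; elim: a => [|p a IHa] a_s.
  by rewrite int_nil big1 // => g _; rewrite /coef big_nil mul0r.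
have p_s : p.2 \in s by apply: a_s; rewrite inE eqxx.
rewrite /int big_cons -/(int a f) IHa => [|q qa]; last by apply: a_s; rewrite inE qa orbT.
rewrite !(bigD1_seq p.2 p_s s_uniq) /= /coef !big_cons eqxx mulrDl -addrA.
congr (_ + (_ + _)); apply: eq_bigr => g /negPf gp.
by rewrite big_cons eq_sym gp.
Qed.

Lemma kg_eqE a b : kg_eq a b <-> forall f, int a f = int b f.
Proof.
split=> [ab f|int_ab g]; last by rewrite !coef_int int_ab.
pose s := undup [seq p.2 | p <- a ++ b].
have sP c : {subset c <= a ++ b} -> forall p, p \in c -> p.2 \in s.
  by move=> cab p pc; rewrite mem_undup map_f ?cab.
rewrite (int_coef f (undup_uniq _) (sP a _)) => [|p]; last by rewrite mem_cat => ->.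
rewrite (int_coef f (undup_uniq _) (sP b _)) => [|p]; last by rewrite mem_cat orbC => ->.
by apply: eq_bigr => g _; rewrite ab.
Qed.

Definition kg_const (k : K) : KG K G := [:: (k, 1%g)].

Lemma int_const k f : int (kg_const k) f = k * f 1%g.
Proof. by rewrite /int big_cons big_nil addr0. Qed.

Local Ltac kg_int := apply/kg_eqE => f; rewrite /kg_sub /kg_opp;
  rewrite ?(int_cat, int_scale, int_mul, int_star, int_nil, int_const).

Lemma kg_eq_sym a b : kg_eq a b -> kg_eq b a.
Proof. by move=> ab g; rewrite ab. Qed.

Lemma kg_addC a b : kg_eq (kg_add a b) (kg_add b a).
Proof. by kg_int; rewrite addrC. Qed.

Lemma kg_addA a b c : kg_eq (kg_add a (kg_add b c)) (kg_add (kg_add a b) c).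
Proof. by kg_int; rewrite addrA. Qed.

Lemma kg_addNl a : kg_eq (kg_add (kg_opp a) a) [::].
Proof. by kg_int; ring. Qed.

Lemma kg_mulA a b c : kg_eq (kg_mul a (kg_mul b c)) (kg_mul (kg_mul a b) c).
Proof.
kg_int; apply: int_ext => g; rewrite int_mul.
by apply: int_ext => g'; apply: int_ext => g''; rewrite monoid.mulgA.
Qed.

Lemma kg_mul1l a : kg_eq (kg_mul (kg_const 1) a) a.
Proof. by kg_int; rewrite mul1r; apply: int_ext => g; rewrite monoid.mul1g. Qed.

Lemma kg_mul1r a : kg_eq (kg_mul a (kg_const 1)) a.
Proof. by kg_int; apply: int_ext => g; rewrite int_const mul1r monoid.mulg1. Qed.

Lemma kg_mulDl a b c : kg_eq (kg_mul (kg_add a b) c) (kg_add (kg_mul a c) (kg_mul b c)).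
Proof. by kg_int. Qed.

Lemma kg_mulDr a b c : kg_eq (kg_mul a (kg_add b c)) (kg_add (kg_mul a b) (kg_mul a c)).
Proof. by kg_int; rewrite -int_fD; apply: int_ext => g; rewrite int_cat. Qed.

Lemma kg_scaleE k a : kg_eq (kg_scale k a) (kg_mul (kg_const k) a).
Proof. by kg_int; congr (_ * _); apply: int_ext => g; rewrite monoid.mul1g. Qed.

Lemma kg_constC k a : kg_eq (kg_mul (kg_const k) a) (kg_mul a (kg_const k)).
Proof.
kg_int; rewrite -int_fZ; apply: int_ext => g.
by rewrite int_const monoid.mul1g monoid.mulg1.
Qed.

Lemma kg_constD k l : kg_eq (kg_const (k + l)) (kg_add (kg_const k) (kg_const l)).
Proof. by kg_int; rewrite mulrDl. Qed.

Lemma kg_constN k : kg_eq (kg_const (- k)) (kg_opp (kg_const k)).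
Proof. by kg_int; ring. Qed.

Lemma kg_starD a b : kg_star (kg_add a b) = kg_add (kg_star a) (kg_star b).
Proof. exact: map_cat. Qed.

Lemma kg_starM a b : kg_eq (kg_star (kg_mul a b)) (kg_mul (kg_star b) (kg_star a)).
Proof.
kg_int; rewrite int_exch; apply: int_ext => g' /=; rewrite int_star.
by apply: int_ext => g; rewrite monoid.invgM.
Qed.

Lemma kg_fixed_sym k a : kg_fixed (kg_scale k (kg_add a (kg_star a))).
Proof.
rewrite /kg_fixed; kg_int; congr (_ * _); rewrite addrC.
by congr (_ + _); apply: int_ext => g; rewrite monoid.invgK.
Qed.

Lemma AG_eq_of_kg a b : kg_eq a b -> AG_eq a b.
Proof.
by move=> /kg_eqE ab; apply: (idealI_eq _ (@idealI_zero K G)); kg_int; rewrite ab; ring.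
Qed.

Lemma ideal_scale k a : idealI a -> idealI (kg_scale k a).
Proof. by move/(idealI_lmul (kg_const k)); apply: idealI_eq; apply/kg_eq_sym/kg_scaleE. Qed.

Lemma AG_eq_sym a b : AG_eq a b -> AG_eq b a.
Proof. by move/(ideal_scale (-1)); apply: idealI_eq; kg_int; ring. Qed.

Lemma AG_eq_trans a b c : AG_eq a b -> AG_eq b c -> AG_eq a c.
Proof. by move=> ab bc; apply: (idealI_eq _ (idealI_add ab bc)); kg_int; ring. Qed.

Lemma AG_eq_add a a' b b' : AG_eq a a' -> AG_eq b b' -> AG_eq (kg_add a b) (kg_add a' b').
Proof. by move=> aa' bb'; apply: (idealI_eq _ (idealI_add aa' bb')); kg_int; ring. Qed.

Lemma AG_eq_opp a a' : AG_eq a a' -> AG_eq (kg_opp a) (kg_opp a').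
Proof. by move/(ideal_scale (-1)); apply: idealI_eq; kg_int; ring. Qed.

Lemma AG_eq_mul a a' b b' : AG_eq a a' -> AG_eq b b' -> AG_eq (kg_mul a b) (kg_mul a' b').
Proof.
move=> /(idealI_rmul b) aa' /(idealI_lmul a') bb'.
apply: (idealI_eq _ (idealI_add aa' bb')); kg_int.
rewrite (int_ext a' (fun g => int_cat _ _ _)) int_fD.
by rewrite (int_ext a' (fun g => int_scale _ _ _)) int_fZ; ring.
Qed.

End FormalSums.

Section Quotient.
Variables (K : fieldType) (G : groupType).
Implicit Types a b c : KG K G.

(* the carrier of A_G: the class of a is the predicate "equal to a in A_G" *)
Definition AGq := {P : KG K G -> Prop | exists a, P = AG_eq a}.
Definition pi a : AGq := exist _ (AG_eq a) (ex_intro _ a erefl).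
Definition repr (u : AGq) : KG K G := proj1_sig (cid (proj2_sig u)).

Lemma reprK u : pi (repr u) = u.
Proof.
case: u => P P_cls; rewrite /repr /pi /=; case: (cid P_cls) => a /= Pa.
by subst P; congr exist; apply: Prop_irrelevance.
Qed.

Lemma AGq_ind (P : AGq -> Prop) : (forall a, P (pi a)) -> forall u, P u.
Proof. by move=> Ppi u; rewrite -(reprK u). Qed.

Lemma piE a b : pi a = pi b <-> AG_eq a b.
Proof.
split=> [/(congr1 (fun u => sval u b)) /= ->|ab].
  exact/AG_eq_of_kg.
have cls_ab : AG_eq a = AG_eq b.
  apply/funext => c; apply/propext.
  by split; apply: AG_eq_trans; [apply: AG_eq_sym|].
rewrite /pi; move: (ex_intro _ a _) (ex_intro _ b _); rewrite cls_ab => ea eb.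
by congr exist; apply: Prop_irrelevance.
Qed.

Lemma pi_kg a b : kg_eq a b -> pi a = pi b.
Proof. by move/AG_eq_of_kg/piE. Qed.

Lemma repr_pi a : AG_eq (repr (pi a)) a.
Proof. by apply/piE; rewrite reprK. Qed.

Definition ag_add u v : AGq := pi (kg_add (repr u) (repr v)).
Definition ag_opp u : AGq := pi (kg_opp (repr u)).
Definition ag_mul u v : AGq := pi (kg_mul (repr u) (repr v)).

Lemma ag_addE a b : ag_add (pi a) (pi b) = pi (kg_add a b).
Proof. by apply/piE/AG_eq_add; apply: repr_pi. Qed.

Lemma ag_oppE a : ag_opp (pi a) = pi (kg_opp a).
Proof. by apply/piE/AG_eq_opp/repr_pi. Qed.

Lemma ag_mulE a b : ag_mul (pi a) (pi b) = pi (kg_mul a b).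
Proof. by apply/piE/AG_eq_mul; apply: repr_pi. Qed.

Local Ltac ag_law law := repeat (let a := fresh "a" in elim/AGq_ind => a);
  rewrite ?(ag_addE, ag_oppE, ag_mulE); apply: pi_kg; apply: law.

Lemma ag_addA : associative ag_add. Proof. by ag_law kg_addA. Qed.
Lemma ag_addC : commutative ag_add. Proof. by ag_law kg_addC. Qed.
Lemma ag_add0 : left_id (pi [::]) ag_add. Proof. by elim/AGq_ind => a; rewrite ag_addE. Qed.
Lemma ag_addNl : left_inverse (pi [::]) ag_opp ag_add. Proof. by ag_law kg_addNl. Qed.
Lemma ag_mulA : associative ag_mul. Proof. by ag_law kg_mulA. Qed.
Lemma ag_mul1l : left_id (pi (@kg_const K G 1)) ag_mul. Proof. by ag_law kg_mul1l. Qed.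
Lemma ag_mul1r : right_id (pi (@kg_const K G 1)) ag_mul. Proof. by ag_law kg_mul1r. Qed.
Lemma ag_mulDl : left_distributive ag_mul ag_add. Proof. by ag_law kg_mulDl. Qed.
Lemma ag_mulDr : right_distributive ag_mul ag_add. Proof. by ag_law kg_mulDr. Qed.

End Quotient.

HB.instance Definition _ (K : fieldType) (G : groupType) := gen_eqMixin (AGq K G).
HB.instance Definition _ (K : fieldType) (G : groupType) := gen_choiceMixin (AGq K G).
HB.instance Definition _ (K : fieldType) (G : groupType) :=
  GRing.isPzRing.Build (AGq K G) (@ag_addA K G) (@ag_addC K G) (@ag_add0 K G)
    (@ag_addNl K G) (@ag_mulA K G) (@ag_mul1l K G) (@ag_mul1r K G)
    (@ag_mulDl K G) (@ag_mulDr K G).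

Section RingAG.
Variables (K : fieldType) (G : groupType).
Implicit Types (a b x y : KG K G) (k : K).
Local Notation AG := (AGq K G).

Lemma pi_add a b : pi (kg_add a b) = pi a + pi b :> AG.
Proof. by rewrite -ag_addE. Qed.

Lemma pi_mul a b : pi (kg_mul a b) = pi a * pi b :> AG.
Proof. by rewrite -ag_mulE. Qed.

Lemma pi_opp a : pi (kg_opp a) = - pi a :> AG.
Proof. by rewrite -ag_oppE. Qed.

Lemma pi_sub a b : pi (kg_sub a b) = pi a - pi b :> AG.
Proof. by rewrite /kg_sub pi_add pi_opp. Qed.

Lemma pi_nil : pi [::] = 0 :> AG.
Proof. by []. Qed.

Definition ag_const k : AG := pi (kg_const G k).

Lemma ag_const_central k : central (ag_const k).
Proof. by move=> u; elim/AGq_ind: u => a; rewrite -!pi_mul; apply/pi_kg/kg_constC. Qed.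

Lemma pi_scale k a : pi (kg_scale k a) = ag_const k * pi a.
Proof. by rewrite -pi_mul; apply/pi_kg/kg_scaleE. Qed.

Lemma ag_constN k : ag_const (- k) = - ag_const k.
Proof. by rewrite -pi_opp; apply/pi_kg/kg_constN. Qed.

Definition half : AG := ag_const 2%:R^-1.

Lemma pi_dotG x y : pi (dotG x y) = dot half (pi x) (pi y).
Proof. by rewrite /dotG pi_scale ag_constN pi_add !pi_mul mulNr. Qed.

Lemma pi_brkG x y : pi (brkG x y) = brk half (pi x) (pi y).
Proof. by rewrite /brkG pi_scale pi_sub !pi_mul. Qed.

Hypothesis charK0 : [pchar K] =i pred0.

Lemma half_twice : half *+ 2 = 1.
Proof.
rewrite mulr2n /half /ag_const -pi_add -(pi_kg (kg_constD _ _)) -mulr2n.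
by rewrite -[2%:R^-1]mulr1 -mulrnAr mulVf //; have /pcharf0P -> := charK0.
Qed.

(* elements of kappa G^# are central in A_G: the symmetrisation
   b = 1/2 (a + star a) represents the same class and is fixed by star in
   kappa G, so the commutators xb - bx generate the ideal *)
Lemma sharp_central a : in_sharp a -> central (pi a).
Proof.
move=> /piE a_sharp u; elim/AGq_ind: u => x.
set b := kg_scale 2%:R^-1 (kg_add a (kg_star a)).
have -> : pi a = pi b.
  by rewrite pi_scale pi_add a_sharp -mulr2n mulrnAr -mulrnAl -/half half_twice mul1r.
by rewrite -!pi_mul; apply/esym/piE/idealI_gen/kg_fixed_sym.
Qed.

Lemma skew_star_mul x y : in_Lambda x -> in_Lambda y ->
  pi (kg_star (kg_mul x y)) = pi y * pi x.
Proof.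
move=> /piE x_skew /piE y_skew.
by rewrite (pi_kg (kg_starM _ _)) pi_mul x_skew y_skew !pi_opp mulrNN.
Qed.

Lemma skew_acomm_central x y : in_Lambda x -> in_Lambda y ->
  central (pi x * pi y + pi y * pi x).
Proof.
move=> xL yL; rewrite -!pi_mul -pi_add; apply/sharp_central/piE.
by rewrite kg_starD !pi_add !skew_star_mul // !pi_mul addrC.
Qed.

Lemma skew_sq_central x : in_Lambda x -> central (pi x * pi x).
Proof. by move=> xL; rewrite -pi_mul; apply/sharp_central/piE; rewrite skew_star_mul // pi_mul. Qed.

End RingAG.

Definition pi_rules := (pi_dotG, pi_brkG, pi_add, pi_mul, pi_sub, pi_opp, pi_nil).

Theorem mainTheorem7 (K : fieldType) (G : groupType)
  (charK0 : [pchar K] =i pred0) :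
  (* (i) bilinearity over kappa G^#, symmetry of ., skew-symmetry of [,] *)
  (forall a b x x' y : KG K G, in_sharp a -> in_sharp b ->
     in_Lambda x -> in_Lambda x' -> in_Lambda y ->
     AG_eq (dotG (kg_add (kg_mul a x) (kg_mul b x')) y)
           (kg_add (kg_mul a (dotG x y)) (kg_mul b (dotG x' y)))) /\
  (forall a b x y y' : KG K G, in_sharp a -> in_sharp b ->
     in_Lambda x -> in_Lambda y -> in_Lambda y' ->
     AG_eq (dotG x (kg_add (kg_mul a y) (kg_mul b y')))
           (kg_add (kg_mul a (dotG x y)) (kg_mul b (dotG x y')))) /\
  (forall a b x x' y : KG K G, in_sharp a -> in_sharp b ->
     in_Lambda x -> in_Lambda x' -> in_Lambda y ->
     AG_eq (brkG (kg_add (kg_mul a x) (kg_mul b x')) y)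
           (kg_add (kg_mul a (brkG x y)) (kg_mul b (brkG x' y)))) /\
  (forall a b x y y' : KG K G, in_sharp a -> in_sharp b ->
     in_Lambda x -> in_Lambda y -> in_Lambda y' ->
     AG_eq (brkG x (kg_add (kg_mul a y) (kg_mul b y')))
           (kg_add (kg_mul a (brkG x y)) (kg_mul b (brkG x y')))) /\
  (forall x y : KG K G, in_Lambda x -> in_Lambda y ->
     AG_eq (dotG x y) (dotG y x)) /\
  (forall x y : KG K G, in_Lambda x -> in_Lambda y ->
     AG_eq (brkG x y) (kg_opp (brkG y x))) /\
  (* (ii) Jacobi identity *)
  (forall x y z : KG K G, in_Lambda x -> in_Lambda y -> in_Lambda z ->
     AG_eq (kg_add (kg_add (brkG (brkG x y) z) (brkG (brkG y z) x))
                   (brkG (brkG z x) y)) [::]) /\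
  (* (iii) (x, y, z) |-> [x, y] . z is trilinear over kappa G^# and alternating *)
  (forall a b x x' y z : KG K G, in_sharp a -> in_sharp b ->
     in_Lambda x -> in_Lambda x' -> in_Lambda y -> in_Lambda z ->
     AG_eq (dotG (brkG (kg_add (kg_mul a x) (kg_mul b x')) y) z)
           (kg_add (kg_mul a (dotG (brkG x y) z))
                   (kg_mul b (dotG (brkG x' y) z)))) /\
  (forall a b x y y' z : KG K G, in_sharp a -> in_sharp b ->
     in_Lambda x -> in_Lambda y -> in_Lambda y' -> in_Lambda z ->
     AG_eq (dotG (brkG x (kg_add (kg_mul a y) (kg_mul b y'))) z)
           (kg_add (kg_mul a (dotG (brkG x y) z))
                   (kg_mul b (dotG (brkG x y') z)))) /\
  (forall a b x y z z' : KG K G, in_sharp a -> in_sharp b ->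
     in_Lambda x -> in_Lambda y -> in_Lambda z -> in_Lambda z' ->
     AG_eq (dotG (brkG x y) (kg_add (kg_mul a z) (kg_mul b z')))
           (kg_add (kg_mul a (dotG (brkG x y) z))
                   (kg_mul b (dotG (brkG x y) z')))) /\
  (forall x y : KG K G, in_Lambda x -> in_Lambda y ->
     AG_eq (dotG (brkG x x) y) [::] /\
     AG_eq (dotG (brkG x y) x) [::] /\
     AG_eq (dotG (brkG y x) x) [::]) /\
  (* (iv) [[x, y], z] = (x . z) y - (y . z) x *)
  (forall x y z : KG K G, in_Lambda x -> in_Lambda y -> in_Lambda z ->
     AG_eq (brkG (brkG x y) z)
           (kg_sub (kg_mul (dotG x z) y) (kg_mul (dotG y z) x))).
Proof.
have h2 := @half_twice K G charK0; have hC : central (half K G) := ag_const_central _.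
have sC := @sharp_central K G charK0.
repeat match goal with |- _ /\ _ => split end.
- move=> a b x x' y /sC aC /sC bC _ _ _; apply/piE; rewrite !pi_rules.
  by rewrite dotDl !dotMl.
- move=> a b x y y' /sC aC /sC bC _ _ _; apply/piE; rewrite !pi_rules.
  by rewrite dotDr !dotMr.
- move=> a b x x' y /sC aC /sC bC _ _ _; apply/piE; rewrite !pi_rules.
  by rewrite brkDl !brkMl.
- move=> a b x y y' /sC aC /sC bC _ _ _; apply/piE; rewrite !pi_rules.
  by rewrite brkDr !brkMr.
- by move=> x y _ _; apply/piE; rewrite !pi_rules dotC.
- by move=> x y _ _; apply/piE; rewrite !pi_rules -brkN.
- by move=> x y z _ _ _; apply/piE; rewrite !pi_rules jacobi.
- move=> a b x x' y z /sC aC /sC bC _ _ _ _; apply/piE; rewrite !pi_rules.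
  by rewrite brkDl !brkMl // dotDl !dotMl.
- move=> a b x y y' z /sC aC /sC bC _ _ _ _; apply/piE; rewrite !pi_rules.
  by rewrite brkDr !brkMr // dotDl !dotMl.
- move=> a b x y z z' /sC aC /sC bC _ _ _ _; apply/piE; rewrite !pi_rules.
  by rewrite dotDr !dotMr.
- move=> x y /(skew_sq_central charK0) xxC _; split; [|split]; apply/piE; rewrite !pi_rules.
  + by rewrite brk_self dot0l.
  + by rewrite dot_brk_self.
  + by rewrite brkN dotNl dot_brk_self ?oppr0.
- move=> x y z xL yL zL; apply/piE; rewrite !pi_rules.
  by rewrite brk_brk_dot //; apply: (skew_acomm_central charK0).
Qed.
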